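(* Under the hypotheses of the infinite horizon dynamic programming lemma (time-invariant UMCO channel on finite alphabets; there exist $V:\mathbb B\to\mathbb R$ and $J^*\in\mathbb R$ with $\lim_{t\to\infty}(\widetilde V_t(b)-tJ^* )=V(b)$ for all $b$, and $(V,J^* )$ solves the average-reward dynamic programming equation), a time-invariant channel input distribution $\{\pi^\infty(a_0|b_{-1}):b_{-1}\in\mathbb B\}$ achieves the supremum in the dynamic programming equation if and only if there exist $\{V(b_{-1}):b_{-1}\in\mathbb B\}$ such that $$J^*+V(b_{-1})=\sum_{b_0}\Big(\log\frac{\mathbf P(b_0|b_{-1},a_0)}{\mathbf P^{\pi^\infty}(b_0|b_{-1})}+V(b_0)\Big)\mathbf P(b_0|b_{-1},a_0)\quad\forall a_0\text{ with }\pi^\infty(a_0|b_{-1})\ne0,$$ $$J^*+V(b_{-1})\le\sum_{b_0}\Big(\log\frac{\mathbf P(b_0|b_{-1},a_0)}{\mathbf P^{\pi^\infty}(b_0|b_{-1})}+V(b_0)\Big)\mathbf P(b_0|b_{-1},a_0)\quad\forall a_0\text{ with }\pi^\infty(a_0|b_{-1})=0.$$ Moreover, $V$ is then the relative value function solving the dynamic programming equation.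
   Context: Time-invariant UMCO channel $\mathbf P(b_i|b_{i-1},a_i)$ on finite alphabets; $\mathbf P^{\pi}(b_0|b_{-1})=\sum_a\mathbf P(b_0|b_{-1},a)\pi(a|b_{-1})$. $\widetilde V_0\equiv0$, $\widetilde V_t(b_{-1})=\sup_{\pi(\cdot|b_{-1})}\sum_{a_0}\{\sum_{b_0}\log\frac{\mathbf P(b_0|b_{-1},a_0)}{\mathbf P^\pi(b_0|b_{-1})}\mathbf P(b_0|b_{-1},a_0)+\sum_{b_0}\widetilde V_{t-1}(b_0)\mathbf P(b_0|b_{-1},a_0)\}\pi(a_0|b_{-1})$. The dynamic programming equation is $J^*+V(b_{-1})=\sup_{\pi(\cdot|b_{-1})}\sum_{a_0}\{\sum_{b_0}\log\frac{\mathbf P(b_0|b_{-1},a_0)}{\mathbf P^\pi(b_0|b_{-1})}\mathbf P(b_0|b_{-1},a_0)+\sum_{b_0}V(b_0)\mathbf P(b_0|b_{-1},a_0)\}\pi(a_0|b_{-1})$. *)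

From Stdlib Require Import Reals List.
Import ListNotations.
Open Scope R_scope.

(* Finite alphabets: A = {0,...,nA-1}, B = {0,...,nB-1}. *)

Definition Rsum (n : nat) (f : nat -> R) : R :=
  fold_right Rplus 0 (map f (seq 0 n)).

(* A channel P(b0 | b_{-1}, a) is encoded as  P b0 bprev a. *)
Definition is_channel (nA nB : nat) (P : nat -> nat -> nat -> R) : Prop :=
  forall bprev a, (bprev < nB)%nat -> (a < nA)%nat ->
    (forall b0, (b0 < nB)%nat -> 0 <= P b0 bprev a) /\
    Rsum nB (fun b0 => P b0 bprev a) = 1.

Definition is_dist (nA : nat) (p : nat -> R) : Prop :=
  (forall a, (a < nA)%nat -> 0 <= p a) /\ Rsum nA p = 1.

Definition Pmix (nA : nat) (P : nat -> nat -> nat -> R) (p : nat -> R)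
  (bprev b0 : nat) : R :=
  Rsum nA (fun a => P b0 bprev a * p a).

(* The term  p * log (p / q)  with convention 0 log (0/q) = 0. *)
Definition klterm (p q : R) : R :=
  if Rlt_dec 0 p then p * ln (p / q) else 0.

Definition Qval (nA nB : nat) (P : nat -> nat -> nat -> R) (p : nat -> R)
  (W : nat -> R) (bprev a : nat) : R :=
  Rsum nB (fun b0 => klterm (P b0 bprev a) (Pmix nA P p bprev b0)
                     + W b0 * P b0 bprev a).

(* Finiteness of the divergence term for action a: whenever P(b0|bprev,a) > 0,
   P^p(b0|bprev) > 0 (otherwise Qval is +infinity). *)
Definition Qfinite (nA nB : nat) (P : nat -> nat -> nat -> R) (p : nat -> R)
  (bprev a : nat) : Prop :=
  forall b0, (b0 < nB)%nat -> 0 < P b0 bprev a -> 0 < Pmix nA P p bprev b0.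

Definition objective (nA nB : nat) (P : nat -> nat -> nat -> R) (W : nat -> R)
  (p : nat -> R) (bprev : nat) : R :=
  Rsum nA (fun a => p a *
     (Rsum nB (fun b0 => klterm (P b0 bprev a) (Pmix nA P p bprev b0))
      + Rsum nB (fun b0 => W b0 * P b0 bprev a))).

Definition obj_values (nA nB : nat) (P : nat -> nat -> nat -> R) (W : nat -> R)
  (bprev : nat) : R -> Prop :=
  fun r => exists p, is_dist nA p /\ r = objective nA nB P W p bprev.

Definition is_finite_horizon_values (nA nB : nat) (P : nat -> nat -> nat -> R)
  (Vt : nat -> nat -> R) : Prop :=
  (forall b, Vt O b = 0) /\
  (forall t b, (b < nB)%nat -> is_lub (obj_values nA nB P (Vt t) b) (Vt (S t) b)).

Definition solves_DP (nA nB : nat) (P : nat -> nat -> nat -> R) (J : R)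
  (W : nat -> R) : Prop :=
  forall b, (b < nB)%nat -> is_lub (obj_values nA nB P W b) (J + W b).

(* A time-invariant input distribution pinf(a | bprev) = pinf a bprev. *)
Definition is_policy (nA nB : nat) (pinf : nat -> nat -> R) : Prop :=
  forall b, (b < nB)%nat -> is_dist nA (fun a => pinf a b).

Definition attains (nA nB : nat) (P : nat -> nat -> nat -> R) (J : R)
  (W : nat -> R) (pinf : nat -> nat -> R) : Prop :=
  forall b, (b < nB)%nat -> objective nA nB P W (fun a => pinf a b) b = J + W b.

Definition KKT (nA nB : nat) (P : nat -> nat -> nat -> R) (J : R)
  (W : nat -> R) (pinf : nat -> nat -> R) : Prop :=
  forall b a, (b < nB)%nat -> (a < nA)%nat ->
    (pinf a b <> 0 -> J + W b = Qval nA nB P (fun a' => pinf a' b) W b a) /\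
    (pinf a b = 0 ->
       Qfinite nA nB P (fun a' => pinf a' b) b a /\
       Qval nA nB P (fun a' => pinf a' b) W b a <= J + W b).

(* The Hamiltonian of the dynamic programming equation at b_{-1} is
   F(pi) = sum_a pi(a) Q_pi(a), where Q_pi(a) = D(P(.|b_{-1},a) || P^pi) + E[V].
   For every output distribution r one has sum_a q(a) D(P_a || P^q)
   <= sum_a q(a) D(P_a || r), with equality at r = P^q (a pointwise consequence
   of ln x <= x - 1).  Taking r = P^pi shows F(q) <= sum_a q(a) Q_pi(a), so the
   conditions Q_pi(a) = J + V on the support of pi and Q_pi(a) <= J + V off it
   make pi a maximiser.  Conversely, if pi is a maximiser, moving it towards the
   point mass at a, q = (1 - eps) pi + eps delta_a, and taking r = P^q gives
   (1 - eps) F(pi) + eps Q_q(a) <= F(q) <= F(pi), hence Q_q(a) <= F(pi).  Since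
   Q_q(a) >= Q_pi(a) - eps C - m ln eps, where m is the mass P_a puts where P^pi
   vanishes, letting eps -> 0 forces m = 0 and Q_pi(a) <= F(pi); the equalities
   on the support follow because F(pi) is the pi-average of the Q_pi(a). *)

From Stdlib Require Import Reals Lra Lia List.
Open Scope R_scope.

Lemma fold_right_Rplus_init (l : list R) (x : R) :
  fold_right Rplus x l = fold_right Rplus 0 l + x.
Proof. induction l as [|y l IH]; simpl; [lra | rewrite IH; lra]. Qed.

Lemma Rsum_S n f : Rsum (S n) f = Rsum n f + f n.
Proof.
  unfold Rsum. rewrite seq_S, map_app, fold_right_app. simpl.
  rewrite fold_right_Rplus_init. lra.
Qed.

Lemma Rsum_ext n f g :
  (forall i, (i < n)%nat -> f i = g i) -> Rsum n f = Rsum n g.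
Proof.
  induction n as [|n IH]; intros H; [reflexivity|].
  rewrite !Rsum_S, IH by (intros; apply H; lia).
  rewrite (H n) by lia. reflexivity.
Qed.

Lemma Rsum_le n f g :
  (forall i, (i < n)%nat -> f i <= g i) -> Rsum n f <= Rsum n g.
Proof.
  induction n as [|n IH]; intros H; [unfold Rsum; simpl; lra|].
  rewrite !Rsum_S.
  apply Rplus_le_compat; [apply IH; intros i Hi|]; apply H; lia.
Qed.

Lemma Rsum_plus n f g : Rsum n (fun i => f i + g i) = Rsum n f + Rsum n g.
Proof. induction n as [|n IH]; [unfold Rsum; simpl; lra | rewrite !Rsum_S, IH; lra]. Qed.

Lemma Rsum_minus n f g : Rsum n (fun i => f i - g i) = Rsum n f - Rsum n g.
Proof. induction n as [|n IH]; [unfold Rsum; simpl; lra | rewrite !Rsum_S, IH; lra]. Qed.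

Lemma Rsum_scal n c f : Rsum n (fun i => c * f i) = c * Rsum n f.
Proof. induction n as [|n IH]; [unfold Rsum; simpl; lra | rewrite !Rsum_S, IH; lra]. Qed.

Lemma Rsum_zero n : Rsum n (fun _ => 0) = 0.
Proof. induction n as [|n IH]; [reflexivity | rewrite Rsum_S, IH; lra]. Qed.

Lemma Rsum_comm n m (f : nat -> nat -> R) :
  Rsum n (fun i => Rsum m (fun j => f i j)) = Rsum m (fun j => Rsum n (fun i => f i j)).
Proof.
  induction n as [|n IH].
  - symmetry. apply Rsum_zero.
  - rewrite Rsum_S, IH, <- Rsum_plus.
    apply Rsum_ext. intros j _. rewrite Rsum_S. reflexivity.
Qed.

Lemma Rsum_nonneg n f : (forall i, (i < n)%nat -> 0 <= f i) -> 0 <= Rsum n f.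
Proof. intros H. rewrite <- (Rsum_zero n). apply Rsum_le. exact H. Qed.

Lemma Rsum_term_le n f k :
  (forall i, (i < n)%nat -> 0 <= f i) -> (k < n)%nat -> f k <= Rsum n f.
Proof.
  induction n as [|n IH]; intros H Hk; [lia|].
  rewrite Rsum_S. destruct (Nat.eq_dec k n) as [->|Hne].
  - assert (0 <= Rsum n f) by (apply Rsum_nonneg; intros; apply H; lia). lra.
  - assert (f k <= Rsum n f) by (apply IH; [intros; apply H|]; lia).
    assert (0 <= f n) by (apply H; lia). lra.
Qed.

Lemma Rsum_nonneg_eq0 n f :
  (forall i, (i < n)%nat -> 0 <= f i) -> Rsum n f = 0 ->
  forall i, (i < n)%nat -> f i = 0.
Proof.
  intros Hf Hs i Hi.
  pose proof (Rsum_term_le n f i Hf Hi). pose proof (Hf i Hi). lra.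
Qed.

Lemma Rsum_indicator n k (f : nat -> R) : (k < n)%nat ->
  Rsum n (fun i => if Nat.eqb i k then f i else 0) = f k.
Proof.
  induction n as [|n IH]; intros Hk; [lia|].
  rewrite Rsum_S. destruct (Nat.eq_dec k n) as [->|Hne].
  - rewrite Nat.eqb_refl, (Rsum_ext n _ (fun _ => 0)), Rsum_zero; [lra|].
    intros i Hi. destruct (Nat.eqb_spec i n); [lia | reflexivity].
  - rewrite IH by lia. destruct (Nat.eqb_spec n k); [lia | lra].
Qed.

Lemma avg_le_bound n (q f : nat -> R) M :
  is_dist n q -> (forall i, (i < n)%nat -> f i <= M) ->
  Rsum n (fun i => q i * f i) <= M.
Proof.
  intros [Hq0 Hq1] Hf.
  apply Rle_trans with (Rsum n (fun i => M * q i)).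
  - apply Rsum_le. intros i Hi. pose proof (Hq0 i Hi). pose proof (Hf i Hi). nra.
  - rewrite Rsum_scal, Hq1. lra.
Qed.

Lemma avg_eq_bound_on_support n (p f : nat -> R) M :
  is_dist n p -> (forall i, (i < n)%nat -> f i <= M) ->
  Rsum n (fun i => p i * f i) = M ->
  forall i, (i < n)%nat -> p i <> 0 -> f i = M.
Proof.
  intros [Hp0 Hp1] Hf Havg i Hi Hpi.
  assert (Hslack : Rsum n (fun j => p j * (M - f j)) = 0).
  { rewrite (Rsum_ext n _ (fun j => M * p j - p j * f j)) by (intros; ring).
    rewrite Rsum_minus, Rsum_scal, Hp1, Havg. ring. }
  assert (Hnn : forall j, (j < n)%nat -> 0 <= p j * (M - f j)).
  { intros j Hj. apply Rmult_le_pos; [apply Hp0; exact Hj | pose proof (Hf j Hj); lra]. }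
  pose proof (Rsum_nonneg_eq0 n _ Hnn Hslack i Hi) as Hi0.
  apply Rmult_integral in Hi0. destruct Hi0; [contradiction | lra].
Qed.

Definition mix_dirac (p : nat -> R) (k : nat) (eps : R) : nat -> R :=
  fun i => (1 - eps) * p i + (if Nat.eqb i k then eps else 0).

Lemma Rsum_mix_dirac n p k eps f : (k < n)%nat ->
  Rsum n (fun i => mix_dirac p k eps i * f i) =
  (1 - eps) * Rsum n (fun i => p i * f i) + eps * f k.
Proof.
  intros Hk. unfold mix_dirac.
  rewrite (Rsum_ext n _ (fun i => (1 - eps) * (p i * f i) +
             (if Nat.eqb i k then eps * f i else 0))).
  - rewrite Rsum_plus, Rsum_scal, (Rsum_indicator n k (fun i => eps * f i)) by exact Hk.
    reflexivity.
  - intros i _. destruct (Nat.eqb i k); ring.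
Qed.

Lemma mix_dirac_dist n p k eps :
  is_dist n p -> (k < n)%nat -> 0 < eps < 1 -> is_dist n (mix_dirac p k eps).
Proof.
  intros [Hp0 Hp1] Hk He. split.
  - intros i Hi. unfold mix_dirac. specialize (Hp0 i Hi). destruct (Nat.eqb i k); nra.
  - rewrite (Rsum_ext n _ (fun i => mix_dirac p k eps i * 1)) by (intros; ring).
    rewrite Rsum_mix_dirac by exact Hk.
    rewrite (Rsum_ext n _ p) by (intros; ring). rewrite Hp1. ring.
Qed.

Lemma Rdiv_nonneg x y : 0 <= x -> 0 <= y -> 0 <= x / y.
Proof.
  intros Hx [Hy|<-]; [|unfold Rdiv; rewrite Rinv_0; lra].
  apply Rmult_le_pos; [exact Hx | left; apply Rinv_0_lt_compat; exact Hy].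
Qed.

Lemma ln_le_sub1 x : 0 < x -> ln x <= x - 1.
Proof.
  intros Hx. pose proof (exp_ineq1_le (ln x)) as Hexp. rewrite exp_ln in Hexp by exact Hx. lra.
Qed.

Lemma ln_0 : ln 0 = 0.
Proof. unfold ln. case (Rlt_dec 0 0); intros; [exfalso; lra | reflexivity]. Qed.

Lemma klterm_0 q : klterm 0 q = 0.
Proof. unfold klterm. destruct (Rlt_dec 0 0); [exfalso; lra | reflexivity]. Qed.

Lemma klterm_pos p q : 0 < p -> klterm p q = p * ln (p / q).
Proof. intros. unfold klterm. destruct (Rlt_dec 0 p); [reflexivity | lra]. Qed.

Lemma klterm_le_change_ref x y r : 0 <= x -> (0 < x -> 0 < y /\ 0 < r) ->
  klterm x y <= klterm x r + x * (r / y - 1).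
Proof.
  intros [Hx|<-] Hyr; [|rewrite !klterm_0; lra].
  destruct (Hyr Hx) as [Hy Hr].
  rewrite !klterm_pos by exact Hx.
  replace (x / y) with (x / r * (r / y)) by (field; lra).
  rewrite ln_mult by (apply Rdiv_lt_0_compat; lra).
  pose proof (ln_le_sub1 (r / y) ltac:(apply Rdiv_lt_0_compat; lra)). nra.
Qed.

(* The junk values [x / 0 = 0] and [ln 0 = 0] make the case [y = 0] an equality. *)
Lemma klterm_mix_ge x y eps : 0 <= x -> 0 <= y -> 0 < eps < 1 ->
  klterm x y - eps * (x * x / y) - ln eps * (if Rlt_dec 0 y then 0 else x)
  <= klterm x ((1 - eps) * y + eps * x).
Proof.
  intros [Hx|<-] Hy He; [|rewrite !klterm_0; destruct (Rlt_dec 0 y); unfold Rdiv; lra].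
  destruct (Rlt_dec 0 y) as [Hy'|Hy'].
  - pose proof (klterm_le_change_ref x y ((1 - eps) * y + eps * x)) as Hch.
    replace (x * (((1 - eps) * y + eps * x) / y - 1))
      with (eps * (x * x / y) - eps * x) in Hch by (field; lra).
    assert (0 < (1 - eps) * y + eps * x) by nra.
    assert (0 < eps * x) by nra.
    specialize (Hch ltac:(lra) ltac:(intros; split; assumption)). lra.
  - replace y with 0 by lra.
    replace ((1 - eps) * 0 + eps * x) with (x * eps) by ring.
    rewrite !klterm_pos by exact Hx.
    replace (x / (x * eps)) with (/ eps) by (field; lra).
    unfold Rdiv. rewrite Rinv_0, !Rmult_0_r, ln_0, ln_Rinv by lra. lra.
Qed.

(* Gibbs' inequality at a single output letter. *)
Lemma Rsum_klterm_mixture_le n (s x : nat -> R) (r : R) :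
  (forall a, (a < n)%nat -> 0 <= s a /\ 0 <= x a) -> 0 <= r ->
  (forall a, (a < n)%nat -> 0 < s a * x a -> 0 < r) ->
  Rsum n (fun a => s a * klterm (x a) (Rsum n (fun a' => x a' * s a'))) <=
  Rsum n (fun a => s a * klterm (x a) r) + (r - Rsum n (fun a' => x a' * s a')).
Proof.
  intros Hsx Hr Hpos. set (y := Rsum n (fun a' => x a' * s a')).
  apply Rle_trans with
    (Rsum n (fun a => s a * klterm (x a) r + (r / y - 1) * (x a * s a))).
  - apply Rsum_le. intros a Ha. destruct (Hsx a Ha) as [[Hs|<-] Hx]; [|lra].
    assert (Hy : x a * s a <= y).
    { apply (Rsum_term_le n (fun a' => x a' * s a')); [|exact Ha].
      intros a' Ha'. destruct (Hsx a' Ha'). nra. }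
    assert (Hch : klterm (x a) y <= klterm (x a) r + x a * (r / y - 1)).
    { apply klterm_le_change_ref; [exact Hx|].
      intros. split; [nra | apply (Hpos a Ha); nra]. }
    nra.
  - rewrite Rsum_plus, Rsum_scal. fold y.
    apply Rplus_le_compat_l.
    destruct (Req_dec y 0) as [->|Hy]; [unfold Rdiv; rewrite Rinv_0; lra|].
    right. field. exact Hy.
Qed.

Lemma Rle_of_forall_eps_mult Q F C :
  (forall eps, 0 < eps < 1 -> Q <= F + eps * C) -> Q <= F.
Proof.
  intros H. destruct (Rle_dec Q F) as [|Hn]; [assumption | exfalso].
  set (d := Q - F). set (eps := d / (d + Rabs C + 1)).
  pose proof (Rabs_pos C). pose proof (Rle_abs C).
  assert (He : 0 < eps < 1).
  { unfold eps. split; [apply Rdiv_lt_0_compat; unfold d; lra|].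
    apply Rmult_lt_reg_r with (d + Rabs C + 1); [unfold d; lra|].
    field_simplify; unfold d; lra. }
  assert (eps * C < d).
  { apply Rle_lt_trans with (eps * Rabs C); [apply Rmult_le_compat_l; lra|].
    unfold eps. apply Rmult_lt_reg_r with (d + Rabs C + 1); [unfold d; lra|].
    field_simplify; unfold d; [nra | lra]. }
  specialize (H eps He). unfold d in *. lra.
Qed.

Lemma eq0_of_mult_ln_bounded_below m K :
  0 <= m -> (forall eps, 0 < eps < 1 -> K <= m * ln eps) -> m = 0.
Proof.
  intros [Hm|Hm] H; [exfalso | lra].
  set (t := - (Rabs K + 1) / m).
  assert (Hmt : m * t = - (Rabs K + 1)) by (unfold t; field; lra).
  assert (Ht : t < 0) by (pose proof (Rabs_pos K); nra).
  assert (He : 0 < exp t < 1).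
  { split; [apply exp_pos | rewrite <- exp_0; apply exp_increasing; exact Ht]. }
  specialize (H (exp t) He). rewrite ln_exp in H.
  pose proof (Rle_abs (- K)) as HK. rewrite Rabs_Ropp in HK. lra.
Qed.

Section Channel.

Variables (nA nB : nat) (P : nat -> nat -> nat -> R).
Hypothesis HP : is_channel nA nB P.

Lemma P_nonneg b a b0 :
  (b < nB)%nat -> (a < nA)%nat -> (b0 < nB)%nat -> 0 <= P b0 b a.
Proof. intros Hb Ha Hb0. exact (proj1 (HP b a Hb Ha) b0 Hb0). Qed.

Lemma Pmix_ge_term p b b0 a : is_dist nA p ->
  (b < nB)%nat -> (b0 < nB)%nat -> (a < nA)%nat ->
  P b0 b a * p a <= Pmix nA P p b b0.
Proof.
  intros [Hp _] Hb Hb0 Ha.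
  apply (Rsum_term_le nA (fun a' => P b0 b a' * p a')); [|exact Ha].
  intros a' Ha'. apply Rmult_le_pos; [apply P_nonneg | apply Hp]; assumption.
Qed.

Lemma Pmix_nonneg p b b0 : is_dist nA p ->
  (b < nB)%nat -> (b0 < nB)%nat -> 0 <= Pmix nA P p b b0.
Proof.
  intros [Hp _] Hb Hb0. apply Rsum_nonneg. intros a Ha.
  apply Rmult_le_pos; [apply P_nonneg | apply Hp]; assumption.
Qed.

Lemma Pmix_sum p b : is_dist nA p -> (b < nB)%nat ->
  Rsum nB (Pmix nA P p b) = 1.
Proof.
  intros [_ Hp1] Hb. unfold Pmix.
  rewrite <- (Rsum_comm nA nB (fun a b0 => P b0 b a * p a)), <- Hp1.
  apply Rsum_ext. intros a Ha.
  rewrite (Rsum_ext nB _ (fun b0 => p a * P b0 b a)) by (intros; ring).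
  rewrite Rsum_scal, (proj2 (HP b a Hb Ha)). ring.
Qed.

Lemma Pmix_mix_dirac p a eps b b0 : (a < nA)%nat ->
  Pmix nA P (mix_dirac p a eps) b b0 = (1 - eps) * Pmix nA P p b b0 + eps * P b0 b a.
Proof.
  intros Ha. unfold Pmix.
  rewrite (Rsum_ext nA _ (fun a' => mix_dirac p a eps a' * P b0 b a')) by (intros; ring).
  rewrite Rsum_mix_dirac by exact Ha.
  rewrite (Rsum_ext nA (fun a' => p a' * P b0 b a') (fun a' => P b0 b a' * p a'))
    by (intros; ring).
  reflexivity.
Qed.

Lemma objective_Qval W p b :
  objective nA nB P W p b = Rsum nA (fun a => p a * Qval nA nB P p W b a).
Proof. apply Rsum_ext. intros a _. unfold Qval. rewrite Rsum_plus. reflexivity. Qed.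

Definition avg_div (q r : nat -> R) (b : nat) : R :=
  Rsum nB (fun b0 => Rsum nA (fun a => q a * klterm (P b0 b a) (r b0))).

Lemma avg_Qval_split q r W b :
  Rsum nA (fun a => q a * Rsum nB (fun b0 => klterm (P b0 b a) (r b0) + W b0 * P b0 b a))
  = avg_div q r b + Rsum nA (fun a => q a * Rsum nB (fun b0 => W b0 * P b0 b a)).
Proof.
  unfold avg_div.
  rewrite <- (Rsum_comm nA nB (fun a b0 => q a * klterm (P b0 b a) (r b0))), <- Rsum_plus.
  apply Rsum_ext. intros a _.
  rewrite Rsum_plus, Rmult_plus_distr_l, <- !Rsum_scal. reflexivity.
Qed.

Lemma avg_div_mixture_le q r b : is_dist nA q -> (b < nB)%nat ->
  (forall b0, (b0 < nB)%nat -> 0 <= r b0) ->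
  (forall a b0, (a < nA)%nat -> (b0 < nB)%nat -> 0 < q a * P b0 b a -> 0 < r b0) ->
  avg_div q (Pmix nA P q b) b <= avg_div q r b + (Rsum nB r - 1).
Proof.
  intros Hq Hb Hr Hpos. unfold avg_div.
  apply Rle_trans with (Rsum nB (fun b0 =>
    Rsum nA (fun a => q a * klterm (P b0 b a) (r b0)) + (r b0 - Pmix nA P q b b0))).
  - apply Rsum_le. intros b0 Hb0. unfold Pmix.
    apply (Rsum_klterm_mixture_le nA q (fun a => P b0 b a)); [|apply Hr, Hb0|].
    + intros a Ha. split; [apply (proj1 Hq a Ha) | apply P_nonneg; assumption].
    + intros a Ha. apply Hpos; assumption.
  - rewrite Rsum_plus, Rsum_minus, (Pmix_sum q b Hq Hb). lra.
Qed.

Definition mass_off_support (p : nat -> R) (b a : nat) : R :=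
  Rsum nB (fun b0 => if Rlt_dec 0 (Pmix nA P p b b0) then 0 else P b0 b a).

Definition chi_sq (p : nat -> R) (b a : nat) : R :=
  Rsum nB (fun b0 => P b0 b a * P b0 b a / Pmix nA P p b b0).

Section Fixed_state.

Variable b : nat.
Hypothesis Hb : (b < nB)%nat.

Lemma objective_le_avg_Qval W p q : is_dist nA p -> is_dist nA q ->
  (forall a, (a < nA)%nat -> p a = 0 -> Qfinite nA nB P p b a) ->
  objective nA nB P W q b <= Rsum nA (fun a => q a * Qval nA nB P p W b a).
Proof.
  intros Hp Hq Hfin.
  rewrite objective_Qval. unfold Qval. rewrite !avg_Qval_split.
  apply Rplus_le_compat_r.
  eapply Rle_trans.
  - apply (avg_div_mixture_le q (Pmix nA P p b) b Hq Hb).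
    + intros b0 Hb0. apply Pmix_nonneg; assumption.
    + intros a b0 Ha Hb0 Hqa.
      assert (HPa : 0 < P b0 b a).
      { pose proof (proj1 Hq a Ha). pose proof (P_nonneg b a b0 Hb Ha Hb0). nra. }
      destruct (Rle_lt_or_eq_dec _ _ (proj1 Hp a Ha)) as [Hpa|Hpa].
      * pose proof (Pmix_ge_term p b b0 a Hp Hb Hb0 Ha). nra.
      * exact (Hfin a Ha (eq_sym Hpa) b0 Hb0 HPa).
  - rewrite (Pmix_sum p b Hp Hb). lra.
Qed.

Lemma objective_mix_dirac_ge W p a eps :
  is_dist nA p -> (a < nA)%nat -> 0 < eps < 1 ->
  (1 - eps) * objective nA nB P W p b
  + eps * Qval nA nB P (mix_dirac p a eps) W b a
  <= objective nA nB P W (mix_dirac p a eps) b.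
Proof.
  intros Hp Ha He.
  pose proof (mix_dirac_dist nA p a eps Hp Ha He) as Hq.
  assert (Hgibbs : objective nA nB P W p b <=
    Rsum nA (fun a' => p a' * Qval nA nB P (mix_dirac p a eps) W b a')).
  { rewrite objective_Qval. unfold Qval. rewrite !avg_Qval_split.
    apply Rplus_le_compat_r.
    eapply Rle_trans.
    - apply (avg_div_mixture_le p (Pmix nA P (mix_dirac p a eps) b) b Hp Hb).
      + intros b0 Hb0. apply Pmix_nonneg; assumption.
      + intros a' b0 Ha' Hb0 Hpa'.
        rewrite Pmix_mix_dirac by exact Ha.
        pose proof (Pmix_ge_term p b b0 a' Hp Hb Hb0 Ha').
        pose proof (P_nonneg b a b0 Hb Ha Hb0). nra.
    - rewrite (Pmix_sum _ b Hq Hb). lra. }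
  rewrite (objective_Qval W (mix_dirac p a eps) b), Rsum_mix_dirac by exact Ha.
  apply Rplus_le_compat_r, Rmult_le_compat_l; [lra | exact Hgibbs].
Qed.

Lemma Qval_mix_dirac_ge W p a eps :
  is_dist nA p -> (a < nA)%nat -> 0 < eps < 1 ->
  Qval nA nB P p W b a - eps * chi_sq p b a - mass_off_support p b a * ln eps
  <= Qval nA nB P (mix_dirac p a eps) W b a.
Proof.
  intros Hp Ha He. unfold Qval, chi_sq, mass_off_support.
  rewrite (Rmult_comm _ (ln eps)), <- !Rsum_scal, <- !Rsum_minus.
  apply Rsum_le. intros b0 Hb0.
  rewrite Pmix_mix_dirac by exact Ha.
  pose proof (klterm_mix_ge (P b0 b a) (Pmix nA P p b b0) eps
                (P_nonneg b a b0 Hb Ha Hb0) (Pmix_nonneg p b b0 Hp Hb Hb0) He).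
  lra.
Qed.

Lemma Qfinite_of_mass_off_support_eq0 p a : (a < nA)%nat ->
  mass_off_support p b a = 0 -> Qfinite nA nB P p b a.
Proof.
  intros Ha Hm b0 Hb0 HPa.
  assert (Hnn : forall i, (i < nB)%nat ->
            0 <= (if Rlt_dec 0 (Pmix nA P p b i) then 0 else P i b a)).
  { intros i Hi. destruct (Rlt_dec 0 (Pmix nA P p b i));
      [lra | apply P_nonneg; assumption]. }
  pose proof (Rsum_nonneg_eq0 nB _ Hnn Hm b0 Hb0) as H0. simpl in H0.
  destruct (Rlt_dec 0 (Pmix nA P p b b0)) as [Hpos|]; [exact Hpos | lra].
Qed.

Lemma maximizer_Qval_le W p : is_dist nA p ->
  (forall q, is_dist nA q -> objective nA nB P W q b <= objective nA nB P W p b) ->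
  forall a, (a < nA)%nat ->
    Qfinite nA nB P p b a /\ Qval nA nB P p W b a <= objective nA nB P W p b.
Proof.
  intros Hp Hmax a Ha.
  set (F := objective nA nB P W p b).
  set (C := chi_sq p b a).
  set (m := mass_off_support p b a).
  assert (Hm : 0 <= m).
  { apply Rsum_nonneg. intros b0 Hb0.
    destruct (Rlt_dec 0 (Pmix nA P p b b0)); [lra | apply P_nonneg; assumption]. }
  assert (HC : 0 <= C).
  { apply Rsum_nonneg. intros b0 Hb0. apply Rdiv_nonneg; [|apply Pmix_nonneg; assumption].
    pose proof (P_nonneg b a b0 Hb Ha Hb0). nra. }
  assert (Hbound : forall eps, 0 < eps < 1 ->
            Qval nA nB P p W b a <= F + eps * C + m * ln eps).
  { intros eps He.
    pose proof (objective_mix_dirac_ge W p a eps Hp Ha He) as Hlow.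
    pose proof (Hmax _ (mix_dirac_dist nA p a eps Hp Ha He)) as Hup.
    pose proof (Qval_mix_dirac_ge W p a eps Hp Ha He) as HQ.
    fold F in Hlow, Hup, HQ. fold C in HQ. fold m in HQ.
    assert (Qval nA nB P (mix_dirac p a eps) W b a <= F)
      by (apply Rmult_le_reg_l with eps; lra).
    lra. }
  assert (Hm0 : m = 0).
  { apply (eq0_of_mult_ln_bounded_below m (Qval nA nB P p W b a - F - C) Hm).
    intros eps He. specialize (Hbound eps He). nra. }
  split; [exact (Qfinite_of_mass_off_support_eq0 p a Ha Hm0)|].
  apply (Rle_of_forall_eps_mult _ _ C). intros eps He.
  specialize (Hbound eps He). rewrite Hm0, Rmult_0_l in Hbound. lra.
Qed.

End Fixed_state.

Lemma KKT_solves_DP_attains J W pinf : is_policy nA nB pinf ->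
  KKT nA nB P J W pinf -> solves_DP nA nB P J W /\ attains nA nB P J W pinf.
Proof.
  intros Hpol HK.
  assert (Hatt : attains nA nB P J W pinf).
  { intros b Hb. rewrite objective_Qval.
    rewrite (Rsum_ext nA _ (fun a => (J + W b) * pinf a b)).
    - rewrite Rsum_scal, (proj2 (Hpol b Hb)). ring.
    - intros a Ha. destruct (Req_dec (pinf a b) 0) as [E|E].
      + rewrite E. ring.
      + rewrite <- (proj1 (HK b a Hb Ha) E). ring. }
  split; [|exact Hatt].
  intros b Hb. split.
  - intros r [q [Hq ->]].
    eapply Rle_trans.
    + apply (objective_le_avg_Qval b Hb W (fun a => pinf a b) q (Hpol b Hb) Hq).
      intros a Ha E. exact (proj1 (proj2 (HK b a Hb Ha) E)).
    + apply avg_le_bound; [exact Hq|]. intros a Ha.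
      destruct (Req_dec (pinf a b) 0) as [E|E].
      * exact (proj2 (proj2 (HK b a Hb Ha) E)).
      * rewrite <- (proj1 (HK b a Hb Ha) E). lra.
  - intros ub Hub. rewrite <- (Hatt b Hb). apply Hub.
    exists (fun a => pinf a b). split; [exact (Hpol b Hb) | reflexivity].
Qed.

Lemma solves_DP_attains_KKT J W pinf : is_policy nA nB pinf ->
  solves_DP nA nB P J W -> attains nA nB P J W pinf -> KKT nA nB P J W pinf.
Proof.
  intros Hpol HDP Hatt b a Hb Ha.
  pose proof (Hpol b Hb) as Hp.
  pose proof (Hatt b Hb) as HF.
  assert (Hopt : forall a', (a' < nA)%nat ->
            Qfinite nA nB P (fun a'' => pinf a'' b) b a' /\
            Qval nA nB P (fun a'' => pinf a'' b) W b a' <= J + W b).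
  { rewrite <- HF. apply (maximizer_Qval_le b Hb W _ Hp).
    intros q Hq. rewrite HF. apply (proj1 (HDP b Hb)). exists q. split; [exact Hq | reflexivity]. }
  split; [|intros _; exact (Hopt a Ha)].
  intros Hne. symmetry.
  apply (avg_eq_bound_on_support nA (fun a' => pinf a' b)
           (fun a' => Qval nA nB P (fun a'' => pinf a'' b) W b a') (J + W b) Hp);
    [intros a' Ha'; exact (proj2 (Hopt a' Ha')) | rewrite <- objective_Qval; exact HF | exact Ha | exact Hne].
Qed.

End Channel.

Theorem mainTheorem7
  (nA nB : nat) (HnA : (0 < nA)%nat) (HnB : (0 < nB)%nat)
  (P : nat -> nat -> nat -> R) (HP : is_channel nA nB P)
  (Vt : nat -> nat -> R) (HVt : is_finite_horizon_values nA nB P Vt)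
  (V : nat -> R) (J : R)
  (Hlim : forall b, (b < nB)%nat -> Un_cv (fun t => Vt t b - INR t * J) (V b))
  (HDP : solves_DP nA nB P J V)
  (pinf : nat -> nat -> R) (Hpinf : is_policy nA nB pinf) :
  ((exists W, solves_DP nA nB P J W /\ attains nA nB P J W pinf)
     <-> (exists W, KKT nA nB P J W pinf))
  /\ (forall W, KKT nA nB P J W pinf ->
        solves_DP nA nB P J W /\ attains nA nB P J W pinf).
Proof.
  split; [split|].
  - intros [W [HW Hatt]]. exists W.
    exact (solves_DP_attains_KKT nA nB P HP J W pinf Hpinf HW Hatt).
  - intros [W HK]. exists W.
    exact (KKT_solves_DP_attains nA nB P HP J W pinf Hpinf HK).
  - intros W HK. exact (KKT_solves_DP_attains nA nB P HP J W pinf Hpinf HK).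
Qed.
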